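(* Let $Q=[(n,q),(\hat n,\hat q)]$ be a pointed irregular type with $q,\hat q$ compatible, and let $k=f_{q,\hat q}$. A list $Q'$ of pairs satisfies $Q'\sim Q$ if and only if $Q'=[(n,q'),(\hat n,\hat q')]$ where $q',\hat q'$ are compatible exponential factors in distinct Galois orbits such that (1) $\mathrm{Levels}(q')=\mathrm{Levels}(q)$ and $\mathrm{Levels}(\hat q')=\mathrm{Levels}(\hat q)$; (2) the common parts satisfy $\mathrm{Levels}(q'_c)=\mathrm{Levels}(q_c)$; (3) $f_{q',\hat q'}=k$. Moreover, (1)–(3) hold if and only if $\mathrm{Levels}(q')=\mathrm{Levels}(q)$, $\mathrm{Levels}(\hat q')=\mathrm{Levels}(\hat q)$ and $f_{q',\hat q'}=k$.
   Context: Exponential factors: finite sums $q=\sum_ka_kx^k$, $a_k\in\mathbb C$, $k\in\mathbb Q_{>0}$; $E(q)$ = set of exponents with $a_k\ne0$; $\mathrm{slope}(q)=\max E(q)$ ($0$ if $q=0$); $\mathrm{ram}(q)$ = least $r\ge1$ with $q\in x^{1/r}\mathbb C[x^{1/r}]$. Galois operator $\sigma(\sum a_kx^k)=\sum a_ke^{-2\pi\sqrt{-1}k}x^k$; Stokes circle $\langle q\rangle=\{\sigma^i(q)\}$. Truncation $\tau_k(\sum a_{k'}x^{k'})=\sum_{k'\ge k}a_{k'}x^{k'}$. $\mathrm{Levels}(q)=\{\mathrm{slope}(q-\sigma^i(q)):i\in\mathbb Z\}\setminus\{0\}$. Common part/fission exponent: for $q,\hat q$ in distinct orbits, if some $k\in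 E(q)$ has $\langle\tau_k(q)\rangle=\langle\tau_k(\hat q)\rangle$, let $k$ be the smallest, $q_c=\tau_k(q)$, $\hat q_c=\tau_k(\hat q)$; else $q_c=\hat q_c=0$. $f_{q,\hat q}=\max(\mathrm{slope}(q-q_c),\mathrm{slope}(\hat q-\hat q_c))$. Compatible means $q_c=\hat q_c$. A pointed irregular type is $[(n_1,q_1),\dots,(n_m,q_m)]$, $n_i\in\mathbb N_{>0}$, $q_i$ in pairwise distinct Galois orbits. For a list $Q'=[(n'_1,q'_1),\dots,(n'_p,q'_p)]$ ($n'_i\in\mathbb N_{>0}$, $q'_i$ exponential factors), $Q'\sim Q$ means $p=m$, $n'_i=n_i$, and $\mathrm{slope}(\sigma^k(q'_i)-\sigma^l(q'_j))=\mathrm{slope}(\sigma^k(q_i)-\sigma^l(q_j))$ for all $1\le i,j\le m$, $0\le k\le\mathrm{ram}(q_i)$, $0\le l\le\mathrm{ram}(q_j)$. *)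

From HB Require Import structures.
From mathcomp Require Import all_boot all_order all_algebra.
From mathcomp Require Import all_classical all_reals.
From mathcomp Require Import trigo.
From mathcomp Require Import complex.
Set Implicit Arguments. Unset Strict Implicit. Unset Printing Implicit Defensive.
Import Order.TTheory GRing.Theory Num.Theory.
Local Open Scope ring_scope.
Local Open Scope classical_set_scope.

Section ExpFactors.
Variable R : realType.
Local Notation C := (complex R).

(* An exponential factor sum_k a_k x^k is encoded by its coefficient function
   k |-> a_k (k : rat); see [is_ef] for the finiteness/positivity condition. *)
Definition ef := rat -> C.

Definition is_ef (q : ef) : Prop :=
  exists s : seq rat, forall k, q k != 0 -> (k \in s) && (0 < k).

Definition ef0 : ef := fun _ => 0.
Definition ef_sub (q p : ef) : ef := fun k => q k - p k.

Definition Eset (q : ef) : set rat := [set k | q k != 0].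

Definition is_slope (q : ef) (s : rat) : Prop :=
  (q = ef0 /\ s = 0) \/ (q s != 0 /\ forall k, q k != 0 -> k <= s).
Definition slope (q : ef) : rat := xget 0 [set s | is_slope q s].

Definition zeta (t : rat) : C :=
  Complex (cos (2 * pi * ratr t)) (- sin (2 * pi * ratr t)).

Definition sigma (q : ef) : ef := fun k => q k * zeta k.
Definition sigmaz (i : int) (q : ef) : ef := fun k => q k * (zeta k) ^ i.

Definition stokes (q : ef) : set ef := [set p | exists i : int, p = sigmaz i q].

Definition trunc (k : rat) (q : ef) : ef := fun k' => if k <= k' then q k' else 0.

Definition in_ram (q : ef) (r : nat) : Prop :=
  (0 < r)%N /\ forall k, q k != 0 -> exists m : nat, k = (m%:R / r%:R)%R.
Definition ram (q : ef) : nat :=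
  xget 1%N [set r | in_ram q r /\ forall r', in_ram q r' -> (r <= r')%N].

Definition Levels (q : ef) : set rat :=
  [set s | s != 0 /\ exists i : int, s = slope (ef_sub q (sigmaz i q))].

Definition is_common_exp (q qh : ef) (k : rat) : Prop :=
  [/\ q k != 0, stokes (trunc k q) = stokes (trunc k qh) &
      forall k', q k' != 0 -> stokes (trunc k' q) = stokes (trunc k' qh) -> k <= k'].
Definition common_exp (q qh : ef) : option rat :=
  xget None [set o | exists k, o = Some k /\ is_common_exp q qh k].

Definition commonL (q qh : ef) : ef :=
  if common_exp q qh is Some k then trunc k q else ef0.
Definition commonR (q qh : ef) : ef :=
  if common_exp q qh is Some k then trunc k qh else ef0.

Definition fission (q qh : ef) : rat :=
  Num.max (slope (ef_sub q (commonL q qh))) (slope (ef_sub qh (commonR q qh))).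

Definition compatible (q qh : ef) : Prop := commonL q qh = commonR q qh.

Definition distinct_orbits (q qh : ef) : Prop := stokes q <> stokes qh.

Definition ef_list (Q : seq (nat * ef)) : Prop :=
  forall i, (i < size Q)%N -> (0 < (nth (0%N, ef0) Q i).1)%N /\ is_ef (nth (0%N, ef0) Q i).2.

Definition pointed_irr_type (Q : seq (nat * ef)) : Prop :=
  ef_list Q /\ forall i j, (i < size Q)%N -> (j < size Q)%N -> i != j ->
    distinct_orbits (nth (0%N, ef0) Q i).2 (nth (0%N, ef0) Q j).2.

Definition sim (Q' Q : seq (nat * ef)) : Prop :=
  let q_ i := (nth (0%N, ef0) Q i).2 in
  let q'_ i := (nth (0%N, ef0) Q' i).2 in
  [/\ size Q' = size Q,
      forall i, (i < size Q)%N -> (nth (0%N, ef0) Q' i).1 = (nth (0%N, ef0) Q i).1 &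
      forall i j, (i < size Q)%N -> (j < size Q)%N ->
        forall k l : nat, (k <= ram (q_ i))%N -> (l <= ram (q_ j))%N ->
          slope (ef_sub (sigmaz k (q'_ i)) (sigmaz l (q'_ j)))
          = slope (ef_sub (sigmaz k (q_ i)) (sigmaz l (q_ j)))].

End ExpFactors.

From HB Require Import structures.
From mathcomp Require Import all_boot all_order all_algebra.
From mathcomp Require Import all_classical all_reals.
From mathcomp Require Import trigo.
From mathcomp Require Import complex.
From mathcomp Require Import ring lra.
Import Order.TTheory GRing.Theory Num.Theory.
Set Implicit Arguments. Unset Strict Implicit. Unset Printing Implicit Defensive.
Local Open Scope ring_scope.
Local Open Scope classical_set_scope.

(* The proof runs through the cross slopes [cross p r m = slope (p - sigma^m r)].
   Since sigma^i commutes with subtraction, Q' ~ Q says exactly that the cross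
   slopes of (q', qh') and of (q, qh) agree for 0 <= m <= ram; as sigma^ram fixes
   q and qh, and hence q' and qh', they then agree for every m.  The cross slopes
   carry all the data of the theorem: the levels of p determine [cross p p] (its
   value at m is the largest level moved by sigma^m); a pair lies in distinct
   orbits iff its cross slopes never vanish; and it is compatible iff
   [cross q qh 0] is minimal, in which case [cross q qh m = max (cross c c m) f]
   for the common part c and the fission exponent f.  Finally Levels c consists
   of the levels of q above f, so condition (2) follows from (1) and (3). *)

Section ExponentialFactors.
Variable R : realType.
Implicit Types (p r q qh : ef R) (k e : rat) (m : int).

Lemma zeta_neq0 t : zeta R t != 0.
Proof.
apply/eqP => /(congr1 (fun z => (complex.Re z, complex.Im z))) /= [hc /eqP].
rewrite oppr_eq0 => /eqP hs.
have := @cos2Dsin2 R (2 * pi * ratr t); rewrite hc hs expr0n add0r => /eqP.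
by rewrite eq_sym oner_eq0.
Qed.

Lemma zetaD a b : zeta R (a + b) = zeta R a * zeta R b.
Proof. by rewrite /zeta rmorphD mulrDr cosD sinD /=; congr Complex; ring. Qed.

Lemma zeta_nat (n : nat) : zeta R n%:R = 1.
Proof.
elim: n => [|n IH]; first by rewrite /zeta rmorph0 mulr0 cos0 sin0 oppr0.
rewrite -addn1 natrD zetaD IH mul1r /zeta rmorph1 mulr1.
by rewrite mulr_natl cos2pi sin2pi oppr0.
Qed.

Lemma zetaMn t (n : nat) : zeta R (t *+ n) = zeta R t ^+ n.
Proof.
elim: n => [|n IH]; first by rewrite mulr0n expr0 -(zeta_nat 0).
by rewrite mulrS zetaD IH exprS.
Qed.

(** * Slopes and truncations *)

Lemma exists_max_in (P : rat -> Prop) (s : seq rat) :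
  (forall k, P k -> k \in s) ->
  (forall k, ~ P k) \/ exists M, P M /\ forall k, P k -> k <= M.
Proof.
elim: s P => [|x s IH] P HP; first by left => k /HP.
have HP' k : P k /\ k != x -> k \in s.
  by case=> /HP; rewrite inE => /orP[/eqP ->|//]; rewrite eqxx.
have [Px|nPx] := pselect (P x); case: (IH _ HP') => [none|[M [[PM _] HM]]].
- right; exists x; split => // k Pk; have [->//|kx] := eqVneq k x.
  by case: (none k).
- right; exists (Num.max M x); split; first by case: leP.
  move=> k Pk; have [->|kx] := eqVneq k x; first by rewrite le_max lexx orbT.
  by rewrite le_max HM.
- left => k Pk; have [kx|kx] := eqVneq k x; first by subst.
  exact: (none k).
- right; exists M; split => // k Pk; apply: HM; split => //.
  by apply/eqP => kx; apply: nPx; rewrite -kx.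
Qed.

Lemma exists_min_in (P : rat -> Prop) (s : seq rat) :
  (forall k, P k -> k \in s) ->
  (forall k, ~ P k) \/ exists M, P M /\ forall k, P k -> M <= k.
Proof.
move=> HP; have HPN k : P (- k) -> k \in map -%R s.
  by move/HP; rewrite -{2}(opprK k) mem_map //; apply: oppr_inj.
case: (exists_max_in HPN) => [none|[M [PM HM]]].
  by left => k Pk; apply: (none (- k)); rewrite opprK.
by right; exists (- M); split => // k Pk; rewrite lerNl HM ?opprK.
Qed.

Lemma is_ef_support p p' : (forall k, p' k != 0 -> p k != 0) -> is_ef p -> is_ef p'.
Proof. by move=> h [s hs]; exists s => k /h /hs. Qed.

Lemma is_ef_gt0 p k : is_ef p -> p k != 0 -> 0 < k.
Proof. by move=> [s hs] /hs /andP[]. Qed.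

Lemma is_ef_sub p r : is_ef p -> is_ef r -> is_ef (ef_sub p r).
Proof.
move=> [s hs] [s' hs']; exists (s ++ s') => k; rewrite /ef_sub mem_cat.
have [pk|/hs /andP[-> ->] //] := eqVneq (p k) 0.
have [rk|/hs' /andP[-> ->]] := eqVneq (r k) 0; last by rewrite orbT.
by rewrite pk rk subrr eqxx.
Qed.

Lemma sigmaz_neq0 m p k : (sigmaz m p k != 0) = (p k != 0).
Proof. by rewrite /sigmaz mulf_eq0 negb_or expfz_neq0 ?zeta_neq0 ?andbT. Qed.

Lemma is_ef_sigmaz m p : is_ef p -> is_ef (sigmaz m p).
Proof. by apply: is_ef_support => k; rewrite sigmaz_neq0. Qed.

Lemma is_ef_trunc k p : is_ef p -> is_ef (trunc k p).
Proof. by apply: is_ef_support => k'; rewrite /trunc; case: ifP; rewrite ?eqxx. Qed.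

Lemma ef_subrr p : ef_sub p p = ef0 R.
Proof. by apply: funext => k; rewrite /ef_sub subrr. Qed.

Lemma ef_sub_eq0 p r : ef_sub p r = ef0 R -> p = r.
Proof.
move=> h; apply: funext => k; apply/eqP.
by rewrite -subr_eq0 -[_ - _]/(ef_sub p r k) h.
Qed.

Lemma slope_uniq p s : is_slope p s -> slope p = s.
Proof.
move=> hs; apply: xget_unique => // s' hs'.
case: hs hs' => [[p0 ->]|[ps hps]] [[p0' ->]|[ps' hps']] //.
- by move: ps'; rewrite p0 eqxx.
- by move: ps; rewrite p0' eqxx.
- by apply/le_anti; rewrite hps' // hps.
Qed.

Lemma slopeP p : is_ef p -> is_slope p (slope p).
Proof.
move=> [s hs]; apply: xgetPex.
have hs' k : p k != 0 -> k \in s by move=> /hs /andP[].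
have [none|[M [pM hM]]] := exists_max_in hs'.
  by exists 0; left; split => //; apply: funext => k; apply/eqP; apply: contraT => /none.
by exists M; right.
Qed.

Lemma slope_ge p k : is_ef p -> p k != 0 -> k <= slope p.
Proof.
move=> hp pk; case: (slopeP hp) => [[p0 _]|[_]]; last exact.
by move: pk; rewrite p0 eqxx.
Qed.

Lemma slope_char p s : p s != 0 -> (forall k, p k != 0 -> k <= s) -> slope p = s.
Proof. by move=> ps h; apply: slope_uniq; right. Qed.

Lemma slope_ef0 : slope (ef0 R) = 0.
Proof. by apply: slope_uniq; left. Qed.

Lemma slope_ge0 p : is_ef p -> 0 <= slope p.
Proof. by move=> hp; case: (slopeP hp) => [[_ ->]//|[/(is_ef_gt0 hp)/ltW]]. Qed.

Lemma slope_eq0 p : is_ef p -> slope p = 0 -> p = ef0 R.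
Proof.
move=> hp; case: (slopeP hp) => [[-> _]//|[/(is_ef_gt0 hp) + _] h].
by rewrite h ltxx.
Qed.

Lemma slope_nz p : is_ef p -> slope p != 0 -> p (slope p) != 0.
Proof. by move=> hp; case: (slopeP hp) => [[_ ->]|[]//]; rewrite eqxx. Qed.

Lemma slope_le p b : is_ef p -> 0 <= b -> (forall k, p k != 0 -> k <= b) -> slope p <= b.
Proof. by move=> hp b0 h; case: (slopeP hp) => [[_ ->]//|[/h]]. Qed.

Lemma slope_ext p p' : (forall k, (p k != 0) = (p' k != 0)) -> slope p = slope p'.
Proof.
have supp_slope (a b : ef R) s :
    (forall k, (a k != 0) = (b k != 0)) -> is_slope a s -> is_slope b s.
  move=> h [[a0 ->]|[ps hs]]; last by right; split=> [|k]; rewrite -h //; apply: hs.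
  left; split=> //; apply: funext => k; apply/eqP.
  by rewrite -[b k == 0]negbK -h a0 /ef0 eqxx.
by move=> h; rewrite /slope; congr xget; apply/seteqP; split=> s; apply: supp_slope.
Qed.

Lemma slope_scale p p' (u : rat -> complex R) :
  (forall k, u k != 0) -> (forall k, p' k = u k * p k) -> slope p' = slope p.
Proof. by move=> hu h; apply: slope_ext => k; rewrite h mulf_eq0 negb_or hu. Qed.

Lemma sub_trunc_coef k p e : ef_sub p (trunc k p) e = if k <= e then 0 else p e.
Proof. by rewrite /ef_sub /trunc; case: ifP => _; rewrite ?subrr ?subr0. Qed.

Lemma trunc_sub k p r : trunc k (ef_sub p r) = ef_sub (trunc k p) (trunc k r).
Proof. by apply: funext => e; rewrite /trunc /ef_sub; case: ifP; rewrite ?subr0. Qed.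

Lemma trunc_sigmaz k m p : trunc k (sigmaz m p) = sigmaz m (trunc k p).
Proof. by apply: funext => e; rewrite /trunc /sigmaz; case: ifP; rewrite ?mul0r. Qed.

Lemma trunc_eq0 k p : is_ef p -> slope p < k -> trunc k p = ef0 R.
Proof.
move=> hp hk; apply: funext => e; rewrite /trunc; case: ifP => // ke.
apply/eqP; apply: contraT => /(slope_ge hp) he.
by move: (lt_le_trans hk ke); rewrite ltNge he.
Qed.

Lemma slope_trunc k p : is_ef p -> slope (trunc k p) = if k <= slope p then slope p else 0.
Proof.
move=> hp; case: ifPn => [hk|]; last first.
  by rewrite -ltNge => /(trunc_eq0 hp) ->; rewrite slope_ef0.
case: (slopeP hp) => [[p0 s0]|[ps hs]].
  by rewrite s0 -slope_ef0; congr slope; apply: funext => e; rewrite /trunc p0; case: ifP.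
apply: slope_char => [|e]; first by rewrite /trunc hk.
by rewrite /trunc; case: ifP; rewrite ?eqxx // => _ /hs.
Qed.

Lemma trunc_eqP k p r : 0 < k -> is_ef p -> is_ef r ->
  trunc k p = trunc k r <-> slope (ef_sub p r) < k.
Proof.
move=> k0 hp hr; have hpr := is_ef_sub hp hr; split => [hpr_k | hlt].
  have := slope_trunc k hpr; rewrite trunc_sub hpr_k ef_subrr slope_ef0.
  by case: leP => // hk s0; move: hk; rewrite -s0 leNgt k0.
by apply: ef_sub_eq0; rewrite -trunc_sub trunc_eq0.
Qed.

Lemma slope_sub_trunc_lt k p : 0 < k -> is_ef p -> slope (ef_sub p (trunc k p)) < k.
Proof.
move=> k0 hp; have hlow := is_ef_sub hp (is_ef_trunc k hp).
case: (slopeP hlow) => [[_ ->]//|[+ _]].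
by rewrite sub_trunc_coef; case: leP; rewrite ?eqxx.
Qed.

Lemma le_slope_sub_trunc k p e : is_ef p -> p e != 0 -> e < k ->
  e <= slope (ef_sub p (trunc k p)).
Proof.
move=> hp pe ek; apply: slope_ge; first exact: is_ef_sub hp (is_ef_trunc k hp).
by rewrite sub_trunc_coef leNgt ek.
Qed.

(** * The Galois action and ramification *)

Lemma sigmaz0 p : sigmaz 0 p = p.
Proof. by apply: funext => k; rewrite /sigmaz expr0z mulr1. Qed.

Lemma sigmazD (a b : int) p : sigmaz a (sigmaz b p) = sigmaz (a + b) p.
Proof.
apply: funext => k; rewrite /sigmaz -mulrA; congr (_ * _).
by rewrite addrC expfzDr ?zeta_neq0.
Qed.

Lemma stokes_sigmaz m p : stokes (sigmaz m p) = stokes p.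
Proof.
apply/seteqP; split => x /= [j ->]; first by exists (j + m); rewrite sigmazD.
by exists (j - m); rewrite sigmazD subrK.
Qed.

Lemma stokes_self p : stokes p p.
Proof. by exists 0; rewrite sigmaz0. Qed.

Lemma sigmaz_mod (N : int) m p : sigmaz N p = p -> sigmaz m p = sigmaz (m %% N)%Z p.
Proof.
move=> hN; apply: funext => k; rewrite /sigmaz.
have [->|pk] := eqVneq (p k) 0; first by rewrite !mul0r.
have zN : zeta R k ^ N = 1.
  by apply: (mulfI pk); rewrite mulr1 -[RHS](congr1 (fun f => f k) hN).
rewrite {1}(divz_eq m N) expfzDr ?zeta_neq0 // [((_ %/ _)%Z * N)%R]mulrC.
by rewrite -exprz_exp zN exp1rz mul1r.
Qed.

Lemma exists_common_denom (s : seq rat) : exists2 r : nat, (0 < r)%N &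
  forall k, k \in s -> 0 < k -> exists n : nat, k = n%:R / r%:R.
Proof.
elim: s => [|x s [r r0 hr]]; first by exists 1%N.
have [x0|xle0] := ltP 0 x; last first.
  exists r => // k; rewrite inE => /orP[/eqP ->|ks]; last exact: hr.
  by rewrite ltNge xle0.
set a := absz (numq x); set b := absz (denq x).
have ha : (a%:R : rat) = (numq x)%:~R.
  by rewrite /a natr_absz ger0_norm // ltW // numq_gt0.
have hb : (b%:R : rat) = (denq x)%:~R.
  by rewrite /b natr_absz ger0_norm // ltW // denq_gt0.
have rn0 : (r%:R : rat) != 0 by rewrite pnatr_eq0 -lt0n.
have bn0 : (b%:R : rat) != 0 by rewrite hb intr_eq0 denq_neq0.
exists (r * b)%N; first by rewrite muln_gt0 r0 /b absz_gt0 denq_neq0.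
move=> k; rewrite inE => /orP[/eqP ->|ks] k0.
  by exists (a * r)%N; rewrite !natrM ha -[LHS]divq_num_den -hb; field; rewrite bn0 rn0.
by have [n ->] := hr k ks k0; exists (n * b)%N; rewrite !natrM; field; rewrite rn0 bn0.
Qed.

Lemma ramP p : is_ef p -> in_ram p (ram p).
Proof.
move=> [s hs]; have [d0 d0_gt0 hd0] := exists_common_denom s.
have ex : exists d, `[< in_ram p d >].
  by exists d0; apply/asboolP; split => // k /hs /andP[]; apply: hd0.
suff [] : [set d | in_ram p d /\ forall d', in_ram p d' -> (d <= d')%N] (ram p) by [].
apply: xgetPex; case: (ex_minnP ex) => d /asboolP hd hmin.
by exists d; split => // d' hd'; apply/hmin/asboolP.
Qed.

Lemma ram_gt0 p : is_ef p -> (0 < ram p)%N.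
Proof. by move=> /ramP []. Qed.

Lemma sigmaz_ram p : is_ef p -> sigmaz (ram p) p = p.
Proof.
move=> hp; have [r0 hr] := ramP hp; apply: funext => k; rewrite /sigmaz.
have [->|/hr [n ->]] := eqVneq (p k) 0; first by rewrite mul0r.
rewrite -exprnP -zetaMn -[X in zeta R X]mulr_natr divfK ?zeta_nat ?mulr1 //.
by rewrite pnatr_eq0 -lt0n.
Qed.

(** * Cross slopes *)

Definition cross p r m := slope (ef_sub p (sigmaz m r)).

Lemma slope_sigmaz_sub (i j : int) p r :
  slope (ef_sub (sigmaz i p) (sigmaz j r)) = cross p r (j - i).
Proof.
apply: (@slope_scale _ _ (fun e => zeta R e ^ i)) => [e|e].
  by rewrite expfz_neq0 ?zeta_neq0.
rewrite /ef_sub /sigmaz mulrBr mulrC; congr (_ - _).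
by rewrite mulrCA -expfzDr ?zeta_neq0 // addrC subrK.
Qed.

Lemma slope_sub_sym p r : slope (ef_sub p r) = slope (ef_sub r p).
Proof. by apply: slope_ext => e; rewrite /ef_sub -opprB oppr_eq0. Qed.

Lemma cross_sym p r m : cross r p m = cross p r (- m).
Proof.
by rewrite /cross slope_sub_sym -[r in ef_sub _ r]sigmaz0 slope_sigmaz_sub sub0r.
Qed.

Lemma cross_mod (N : int) p r m : sigmaz N r = r -> cross p r m = cross p r (m %% N)%Z.
Proof. by move=> h; rewrite /cross (sigmaz_mod m h). Qed.

Lemma cross_self0 p : cross p p 0 = 0.
Proof. by rewrite /cross sigmaz0 ef_subrr slope_ef0. Qed.

Lemma cross_ram p : is_ef p -> cross p p (ram p) = 0.
Proof. by move=> hp; rewrite /cross sigmaz_ram // ef_subrr slope_ef0. Qed.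

Lemma cross_trunc k p r m : is_ef p -> is_ef r ->
  cross (trunc k p) (trunc k r) m = if k <= cross p r m then cross p r m else 0.
Proof.
move=> hp hr; rewrite /cross -trunc_sigmaz -trunc_sub slope_trunc //.
exact: is_ef_sub hp (is_ef_sigmaz m hr).
Qed.

Lemma sigmaz_of_cross0 p r m : is_ef p -> is_ef r -> cross p r m = 0 -> p = sigmaz m r.
Proof. by move=> hp hr /(slope_eq0 (is_ef_sub hp (is_ef_sigmaz m hr)))/ef_sub_eq0. Qed.

Lemma distinct_orbitsP p r : is_ef p -> is_ef r ->
  distinct_orbits p r <-> forall m, cross p r m != 0.
Proof.
move=> hp hr; split=> [hd m | hnz hst].
  by apply/eqP => /(sigmaz_of_cross0 hp hr) hpr; apply: hd; rewrite hpr stokes_sigmaz.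
have [j hj] : stokes r p by rewrite -hst; apply: stokes_self.
by have /eqP := hnz j; apply; rewrite /cross -hj ef_subrr slope_ef0.
Qed.

Lemma sigmaz_ram_of_cross p p' : is_ef p -> is_ef p' ->
  cross p' p' (ram p) = cross p p (ram p) -> sigmaz (ram p) p' = p'.
Proof. by move=> hp hp' h; apply/esym/sigmaz_of_cross0 => //; rewrite h cross_ram. Qed.

Lemma cross_eq_mod (N : nat) p r p' r' : (0 < N)%N ->
  sigmaz N r = r -> sigmaz N r' = r' ->
  (forall l : nat, (l < N)%N -> cross p' r' l = cross p r l) ->
  forall m, cross p' r' m = cross p r m.
Proof.
move=> N0 hr hr' h m; rewrite (cross_mod _ _ hr') (cross_mod _ _ hr).
have N0z : (0 < N%:Z)%R by rewrite ltz_nat.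
have m0 : 0 <= (m %% N)%Z by rewrite modz_ge0 // gt_eqF.
by rewrite -(gez0_abs m0); apply: h; rewrite -ltz_nat gez0_abs // ltz_pmod.
Qed.

(** * Levels *)

Lemma sub_sigmaz_self_coef p m e :
  (ef_sub p (sigmaz m p) e != 0) = (p e != 0) && (zeta R e ^ m != 1).
Proof.
rewrite /ef_sub /sigmaz -{1}[p e]mulr1 -mulrBr mulf_eq0 negb_or subr_eq0.
by rewrite [1 == _]eq_sym.
Qed.

Lemma cross_diag_coef p m : is_ef p -> cross p p m != 0 ->
  p (cross p p m) != 0 /\ zeta R (cross p p m) ^ m != 1.
Proof.
move=> hp /(slope_nz (is_ef_sub hp (is_ef_sigmaz m hp))).
by rewrite sub_sigmaz_self_coef => /andP.
Qed.

Lemma level_neq0 p L : is_ef p -> Levels p L -> p L != 0.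
Proof. by move=> hp [L0 [i hL]]; rewrite hL in L0 *; have [] := cross_diag_coef hp L0. Qed.

Lemma level_le_cross p m L : is_ef p -> Levels p L -> zeta R L ^ m != 1 ->
  L <= cross p p m.
Proof.
move=> hp hL moved; apply: slope_ge; first exact: is_ef_sub hp (is_ef_sigmaz m hp).
by rewrite sub_sigmaz_self_coef moved andbT level_neq0.
Qed.

Lemma cross_diag_le p p' m : is_ef p -> is_ef p' -> Levels p `<=` Levels p' ->
  cross p p m <= cross p' p' m.
Proof.
move=> hp hp' sub; have [->|c0] := eqVneq (cross p p m) 0.
  exact: slope_ge0 (is_ef_sub hp' (is_ef_sigmaz m hp')).
have [_ moved] := cross_diag_coef hp c0.
by apply: level_le_cross moved => //; apply: sub; split => //; exists m.
Qed.

Lemma Levels_eq_cross p p' : is_ef p -> is_ef p' ->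
  Levels p' = Levels p <-> forall m, cross p' p' m = cross p p m.
Proof.
move=> hp hp'; split=> [hL m | h].
  by apply/le_anti; rewrite !cross_diag_le // hL.
apply/seteqP; split=> L /= [L0 [i hL]]; split=> //; rewrite hL; exists i.
  exact: h.
exact: esym (h i).
Qed.

Lemma levels_trunc k p : is_ef p -> Levels (trunc k p) = [set L | Levels p L /\ k <= L].
Proof.
move=> hp; apply/seteqP; split=> L /=.
  move=> [L0 [i hL]]; rewrite hL -/(cross _ _ i) cross_trunc // in L0 *.
  by case: ifP L0; rewrite ?eqxx // => hk L0; split=> //; split=> //; exists i.
move=> [[L0 [i hL]] hk]; rewrite hL -/(cross _ _ i) in L0 hk *.
by split=> //; exists i; rewrite -/(cross _ _ i) cross_trunc // hk.
Qed.

(** * Common parts and the fission exponent *)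

Lemma common_expP q qh k : common_exp q qh = Some k -> is_common_exp q qh k.
Proof. by rewrite /common_exp; case: xgetP => [_ _ [k' [-> hk]] [<-]|]. Qed.

Lemma common_exp_None q qh : is_ef q -> common_exp q qh = None ->
  forall k, q k != 0 -> stokes (trunc k q) <> stokes (trunc k qh).
Proof.
move=> [s hs] hN k qk heq.
have hP e : q e != 0 /\ stokes (trunc e q) = stokes (trunc e qh) -> e \in s.
  by case=> /hs /andP[].
case: (exists_min_in hP) => [none|[M [[qM hM] hmin]]]; first exact: (none k).
suff : [set o | exists k, o = Some k /\ is_common_exp q qh k] (common_exp q qh).
  by rewrite hN => -[? []].
apply: (@xgetI _ None _ (Some M)); exists M; split => //; split => // e qe he.
exact: hmin.
Qed.

Lemma common_threshold q qh : is_ef q -> is_ef qh -> exists2 k, 0 < k &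
  [/\ commonL q qh = trunc k q, commonR q qh = trunc k qh &
      forall e, q e != 0 -> stokes (trunc e q) = stokes (trunc e qh) -> k <= e].
Proof.
move=> hq hqh; rewrite /commonL /commonR; case E: (common_exp q qh) => [k|].
  by have [qk _ hmin] := common_expP E; exists k => //; apply: is_ef_gt0 qk.
have sq := slope_ge0 hq; have sqh := slope_ge0 hqh.
(* any threshold above both slopes truncates q and qh to 0 *)
exists (slope q + slope qh + 1); first lra.
split; [apply/esym/trunc_eq0 => //; lra | apply/esym/trunc_eq0 => //; lra |].
by move=> e qe /(common_exp_None hq E qe).
Qed.

Section CommonPart.
Variables (q qh : ef R) (k : rat).
Hypotheses (hq : is_ef q) (hqh : is_ef qh) (k_gt0 : 0 < k).

Let f := Num.max (slope (ef_sub q (trunc k q))) (slope (ef_sub qh (trunc k qh))).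

Lemma fission_lt_k : f < k.
Proof. by rewrite gt_max !slope_sub_trunc_lt. Qed.

Lemma le_fission e : e < k -> q e != 0 \/ qh e != 0 -> e <= f.
Proof.
move=> ek [ne|ne]; rewrite le_max; first by rewrite (le_slope_sub_trunc hq ne ek).
by rewrite (le_slope_sub_trunc hqh ne ek) orbT.
Qed.

Lemma fission_coef : f != 0 -> q f != 0 \/ qh f != 0.
Proof.
have low_coef p : is_ef p -> slope (ef_sub p (trunc k p)) != 0 ->
    p (slope (ef_sub p (trunc k p))) != 0.
  move=> hp /(slope_nz (is_ef_sub hp (is_ef_trunc k hp))).
  by rewrite sub_trunc_coef; case: ifP; rewrite ?eqxx.
by rewrite /f; case: leP => _ f0; [right|left]; apply: low_coef.
Qed.

Lemma level_ge_k L : Levels q L -> (k <= L) = (f < L).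
Proof.
move=> hL; apply/idP/idP => [/(lt_le_trans fission_lt_k)//|fL].
rewrite leNgt; apply/negP => /le_fission /(_ (or_introl (level_neq0 hq hL))).
by rewrite leNgt fL.
Qed.

Hypotheses (trunc_eq : trunc k q = trunc k qh) (hdist : distinct_orbits q qh).
Hypothesis k_min :
  forall e, q e != 0 -> stokes (trunc e q) = stokes (trunc e qh) -> k <= e.

Lemma fission_gt0 : 0 < f.
Proof.
have low_ge0 p : is_ef p -> 0 <= slope (ef_sub p (trunc k p)).
  by move=> hp; apply: slope_ge0 (is_ef_sub hp (is_ef_trunc k hp)).
have trunc_id p : is_ef p -> slope (ef_sub p (trunc k p)) = 0 -> p = trunc k p.
  by move=> hp /(slope_eq0 (is_ef_sub hp (is_ef_trunc k hp)))/ef_sub_eq0.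
rewrite lt_neqAle le_max low_ge0 // andbT eq_sym; apply/negP => /eqP f0.
have [s1 s2] : slope (ef_sub q (trunc k q)) = 0 /\ slope (ef_sub qh (trunc k qh)) = 0.
  by split; apply/le_anti; rewrite low_ge0 // andbT -f0 le_max lexx ?orbT.
by apply: hdist; rewrite (trunc_id q) // trunc_eq -(trunc_id qh).
Qed.

(* Below f, the truncations at f of q and sigma^m qh would coincide, against the
   minimality of k. *)
Lemma fission_le_cross m : f <= cross q qh m.
Proof.
rewrite leNgt; apply/negP => hlt.
have htr : trunc f q = trunc f (sigmaz m qh).
  by apply/trunc_eqP => //; [exact: fission_gt0 | exact: is_ef_sigmaz].
have qf : q f = sigmaz m qh f.
  by have := congr1 (fun g => g f) htr; rewrite /trunc lexx.
have qf0 : q f != 0.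
  rewrite qf sigmaz_neq0; have [|//] := fission_coef (lt0r_neq0 fission_gt0).
  by rewrite qf sigmaz_neq0.
have := k_min qf0; rewrite htr trunc_sigmaz stokes_sigmaz => /(_ erefl).
by rewrite leNgt fission_lt_k.
Qed.

Lemma cross_le_fission m : cross q qh m < k -> cross q qh m <= f.
Proof.
move=> hlt; have hD := is_ef_sub hq (is_ef_sigmaz m hqh).
apply: slope_le => // [|e De]; first exact: ltW fission_gt0.
have ek : e < k := le_lt_trans (slope_ge hD De) hlt.
apply: le_fission => //; apply/orP; apply: contraNT De.
by rewrite negb_or !negbK /ef_sub /sigmaz => /andP[/eqP-> /eqP->]; rewrite mul0r subrr.
Qed.

Lemma cross_common m : cross q qh m = Num.max (cross (trunc k q) (trunc k q) m) f.
Proof.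
rewrite {2}trunc_eq cross_trunc //; case: leP => hk.
  by rewrite max_l // ltW // (lt_le_trans fission_lt_k hk).
rewrite max_r ?(ltW fission_gt0) //.
by apply/le_anti; rewrite fission_le_cross cross_le_fission.
Qed.

End CommonPart.

Lemma is_ef_commonL q qh : is_ef q -> is_ef qh -> is_ef (commonL q qh).
Proof.
by move=> hq hqh; have [k _ [-> _ _]] := common_threshold hq hqh; apply: is_ef_trunc.
Qed.

Lemma levels_commonL q qh : is_ef q -> is_ef qh ->
  Levels (commonL q qh) = [set L | Levels q L /\ fission q qh < L].
Proof.
move=> hq hqh; have [k k0 [hL hR _]] := common_threshold hq hqh.
rewrite /fission hL hR levels_trunc //; apply/seteqP.
by split=> L [qL hk]; split=> //; rewrite -(level_ge_k hq hqh k0 qL) in hk *.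
Qed.

Lemma fission_ge0 q qh : is_ef q -> is_ef qh -> 0 <= fission q qh.
Proof.
move=> hq hqh; rewrite le_max slope_ge0 //.
exact: is_ef_sub hq (is_ef_commonL hq hqh).
Qed.

Lemma cross_compatible q qh m : is_ef q -> is_ef qh -> distinct_orbits q qh ->
  compatible q qh ->
  cross q qh m = Num.max (cross (commonL q qh) (commonL q qh) m) (fission q qh).
Proof.
move=> hq hqh hd hc; have [k k0 [hL hR hmin]] := common_threshold hq hqh.
by rewrite /fission hL hR; apply: cross_common => //; rewrite -hL -hR.
Qed.

Lemma cross0_fission q qh : is_ef q -> is_ef qh -> distinct_orbits q qh ->
  compatible q qh -> cross q qh 0 = fission q qh.
Proof. by move=> *; rewrite cross_compatible // cross_self0 max_r // fission_ge0. Qed.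

Lemma compatible_cross0_min q qh : is_ef q -> is_ef qh -> distinct_orbits q qh ->
  compatible q qh <-> forall m, cross q qh 0 <= cross q qh m.
Proof.
move=> hq hqh hd; split=> [hc m | hmin].
  by rewrite cross0_fission // cross_compatible // le_max lexx orbT.
rewrite /compatible /commonL /commonR; case E: (common_exp q qh) => [k|] //.
have [qk heq _] := common_expP E; have k0 := is_ef_gt0 hq qk.
have [j hj] : stokes (trunc k qh) (trunc k q) by rewrite -heq; apply: stokes_self.
(* [trunc k q = sigma^j (trunc k qh)] gives [cross q qh j < k], hence [cross q qh 0 < k]. *)
apply/trunc_eqP => //; rewrite -[qh in ef_sub _ qh]sigmaz0.
apply: le_lt_trans (hmin j) _; apply/trunc_eqP => //; first exact: is_ef_sigmaz.
by rewrite trunc_sigmaz.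
Qed.

(** * Similarity of pairs *)

Lemma sim_pair_shape n nh q qh (Q' : seq (nat * ef R)) :
  sim Q' [:: (n, q); (nh, qh)] -> exists q' qh', Q' = [:: (n, q'); (nh, qh')].
Proof.
move=> [hsz hfst _]; case: Q' hsz hfst => [|[na q'] [|[nb qh'] [|]]] // _ hfst.
have /= -> := hfst 0%N erefl; have /= -> := hfst 1%N erefl; by exists q', qh'.
Qed.

Lemma sim_pairP n nh q qh q' qh' : is_ef q -> is_ef qh -> is_ef q' -> is_ef qh' ->
  sim [:: (n, q'); (nh, qh')] [:: (n, q); (nh, qh)] <->
  [/\ forall m, cross q' q' m = cross q q m, forall m, cross qh' qh' m = cross qh qh m
    & forall m, cross q' qh' m = cross q qh m].
Proof.
move=> hq hqh hq' hqh'; split=> [[_ _ hsl] | [c00 c11 c01]]; last first.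
  split=> //; first by case=> [|[|]].
  move=> [|[|i]] [|[|j]] // _ _ a b _ _ /=; rewrite !slope_sigmaz_sub //.
  by rewrite cross_sym c01 -cross_sym.
have h00 (l : nat) : (l <= ram q)%N -> cross q' q' l = cross q q l.
  by move=> /(hsl 0%N 0%N erefl erefl 0%N l (leq0n _)); rewrite !slope_sigmaz_sub subr0.
have h11 (l : nat) : (l <= ram qh)%N -> cross qh' qh' l = cross qh qh l.
  by move=> /(hsl 1%N 1%N erefl erefl 0%N l (leq0n _)); rewrite !slope_sigmaz_sub subr0.
have h01 (l : nat) : (l <= ram qh)%N -> cross q' qh' l = cross q qh l.
  by move=> /(hsl 0%N 1%N erefl erefl 0%N l (leq0n _)); rewrite !slope_sigmaz_sub subr0.
have per_q : sigmaz (ram q) q' = q' by apply: sigmaz_ram_of_cross; rewrite ?h00.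
have per_qh : sigmaz (ram qh) qh' = qh' by apply: sigmaz_ram_of_cross; rewrite ?h11.
split; apply: cross_eq_mod (ram_gt0 _) (sigmaz_ram _) _ _ => // l /ltnW;
  [exact: h00 | exact: h11 | exact: h01].
Qed.

End ExponentialFactors.

Theorem mainTheorem5 (R : realType) (n nh : nat) (q qh : ef R) :
  pointed_irr_type [:: (n, q); (nh, qh)] ->
  compatible q qh ->
  (forall Q' : seq (nat * ef R), ef_list Q' ->
     (sim Q' [:: (n, q); (nh, qh)] <->
      exists q' qh' : ef R,
        [/\ Q' = [:: (n, q'); (nh, qh')],
            is_ef q' /\ is_ef qh', distinct_orbits q' qh', compatible q' qh' &
            [/\ Levels q' = Levels q /\ Levels qh' = Levels qh,
                Levels (commonL q' qh') = Levels (commonL q qh) &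
                fission q' qh' = fission q qh]]))
  /\
  (forall q' qh' : ef R, is_ef q' -> is_ef qh' -> distinct_orbits q' qh' ->
     compatible q' qh' ->
     ([/\ Levels q' = Levels q /\ Levels qh' = Levels qh,
          Levels (commonL q' qh') = Levels (commonL q qh) &
          fission q' qh' = fission q qh]
      <->
      [/\ Levels q' = Levels q, Levels qh' = Levels qh &
          fission q' qh' = fission q qh])).
Proof.
move=> [hl hd] hc.
have [hq hqh] : is_ef q /\ is_ef qh by split; [case: (hl 0%N) | case: (hl 1%N)].
have hdist : distinct_orbits q qh by apply: (hd 0%N 1%N).
split=> [Q' hQ' | q' qh' hq' hqh' _ _]; last first.
  by rewrite !levels_commonL //; split=> [[[-> ->] _ ->] | [-> -> ->]].
split=> [hsim | [q' [qh' [-> [hq' hqh'] hd' hc' [[L1 L2] Lc hf]]]]].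
  have [q' [qh' eQ']] := sim_pair_shape hsim; subst Q'.
  have [hq' hqh'] : is_ef q' /\ is_ef qh' by split; [case: (hQ' 0%N) | case: (hQ' 1%N)].
  have [c00 c11 c01] := (sim_pairP _ _ hq hqh hq' hqh').1 hsim.
  have hd' : distinct_orbits q' qh'.
    by apply/distinct_orbitsP => // m; rewrite c01; move: m; apply/distinct_orbitsP.
  have hc' : compatible q' qh'.
    apply/compatible_cross0_min => // m; rewrite !c01.
    by move: m; apply/compatible_cross0_min.
  have hf : fission q' qh' = fission q qh.
    by rewrite -(cross0_fission hq' hqh' hd' hc') -(cross0_fission hq hqh hdist hc) c01.
  have L1 : Levels q' = Levels q by apply/Levels_eq_cross.
  have L2 : Levels qh' = Levels qh by apply/Levels_eq_cross.
  by exists q', qh'; split=> //; split=> //; rewrite !levels_commonL // L1 hf.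
apply/sim_pairP => //; split; [exact/Levels_eq_cross | exact/Levels_eq_cross |].
move=> m; rewrite (cross_compatible m hq hqh hdist hc) (cross_compatible m hq' hqh' hd' hc').
rewrite hf.
by rewrite (proj1 (Levels_eq_cross (is_ef_commonL hq hqh) (is_ef_commonL hq' hqh')) Lc).
Qed.
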